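(* Let $X\in\mathbb{R}^{n\times r}$ have linearly independent columns and let $A\in\mathbb{R}^{r\times r}$ be skewsymmetric. Let $Y$ be the random subset of $\{1,\dots,n\}$ with law $$\mathbb{P}(Y=\mathtt{C})=\frac{\det\begin{bmatrix}0_{|\mathtt{C}|}&X_{\mathtt{C}:}\\-(X_{\mathtt{C}:})^\top&A\end{bmatrix}}{\det(A+X^\top X)}.$$ Equivalently, $Y$ is the DPP with correlation kernel $K=X(A+X^\top X)^{-1}X^\top$. Let $\pm\mathrm{i}\nu_1,\dots,\pm\mathrm{i}\nu_k$, with $\nu_\ell$ real, be the paired eigenvalues of $S=(X^\top X)^{-1/2}A(X^\top X)^{-1/2}$ in its Youla decomposition; when $r$ is odd there is one additional unpaired eigenvalue $0$. If $r=2k+1$, then $|Y|$ has the same law as $$1+2\sum_{\ell=1}^k B_\ell,$$ where $B_1,\dots,B_k$ are independent Bernoulli random variables and $B_\ell$ has success probability $1/(1+\nu_\ell^2)$. If $r=2k$, then $|Y|$ has the law of $2\sum_{\ell=1}^kB_\ell$.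
   Context: $X_{\mathtt{C}:}$ is the submatrix of $X$ with rows indexed by $\mathtt{C}$ in increasing order. $0_m$ is the $m\times m$ zero matrix. The Youla decomposition of a real skewsymmetric $r\times r$ matrix $S$ writes its spectrum as conjugate pairs $\pm\mathrm{i}\nu_\ell$, $\ell=1,\dots,\lfloor r/2\rfloor$, plus one additional eigenvalue $0$ if $r$ is odd, with orthonormal eigenvectors $u_\ell,\bar u_\ell$ (and $v_0$). *)

From HB Require Import structures.
From mathcomp Require Import all_boot all_order all_algebra.
From mathcomp Require Import reals.
Set Implicit Arguments. Unset Strict Implicit. Unset Printing Implicit Defensive.
Import Order.TTheory GRing.Theory Num.Theory.
Local Open Scope ring_scope.

Definition rows_of (R : Type) (n r : nat) (X : 'M[R]_(n, r)) (C : {set 'I_n})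
  : 'M[R]_(#|C|, r) :=
  \matrix_(i < #|C|, j < r) X (enum_val i) j.

Definition dpp_block (R : realType) (n r : nat) (X : 'M[R]_(n, r)) (A : 'M[R]_r)
  (C : {set 'I_n}) : 'M[R]_(#|C| + r) :=
  block_mx (0 : 'M[R]_(#|C|, #|C|)) (rows_of X C) (- (rows_of X C)^T) A.

Definition dpp_prob (R : realType) (n r : nat) (X : 'M[R]_(n, r)) (A : 'M[R]_r)
  (C : {set 'I_n}) : R :=
  \det (dpp_block X A C) / \det (A + X^T *m X).

(* Law of c + 2 * sum_l B_l, where B_l are independent Bernoulli(p l):
   P(c + 2 * sum B = m) = sum over the set S of indices with B_l = 1. *)
Definition bern_affine_law (R : realType) (k : nat) (c : nat) (p : 'I_k -> R)
  (m : nat) : R :=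
  \sum_(S : {set 'I_k} | (c + 2 * #|S|)%N == m)
     (\prod_(l in S) p l) * (\prod_(l in ~: S) (1 - p l)).

Definition sym_posdef (R : realType) (r : nat) (Q : 'M[R]_r) : Prop :=
  Q^T = Q /\ forall v : 'rV[R]_r, v != 0 -> 0 < (v *m Q *m v^T) 0 0.

From HB Require Import structures.
From mathcomp Require Import all_boot all_order all_algebra perm.
From mathcomp Require Import reals.
Import Order.TTheory GRing.Theory Num.Theory.
Local Open Scope ring_scope.

(** Adding [pid_mx n] to [[0, X; -u X^T, A]] and expanding the determinant
    along its first [n] rows writes [det [1, X; -u X^T, A]] as the sum of the
    principal minors on the index sets [C ⊎ 'I_r]; the minor of [C] is [u^|C|]
    times the bordered determinant [det [0, X_C; -X_C^T, A]].  By a Schur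
    complement the left side is [det (A + u X^T X)], so
      [Σ_C u^|C| det [0, X_C; -X_C^T, A] = det (A + u X^T X)].
    With [A = Q S Q] and [X^T X = Q^2] the right side is [det Q^2 det (S + u)],
    and [S] being skew, [det (S + u)] is the characteristic polynomial of [S],
    [u^(r mod 2) ∏_l (u^2 + ν_l^2)].  The law of [|Y|] is the coefficient
    sequence of this polynomial divided by its value at [u = 1], i.e. of
    [u^(r mod 2) ∏_l (p_l u^2 + 1 - p_l)] with [p_l = 1/(1 + ν_l^2)], which is
    the generating function of [(r mod 2) + 2 Σ_l B_l]. *)

Lemma det_mxsub_bij {R : comNzRingType} {k N} (M : 'M[R]_N) {f : 'I_k -> 'I_N} :
  injective f -> k = N -> \det (mxsub f f M) = \det M.
Proof.
move=> f_inj eq_kN; subst N; pose s := perm f_inj.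
have -> : mxsub f f M = perm_mx s *m M *m perm_mx s^-1.
  by rewrite -col_permE -row_permE; apply/matrixP => i j; rewrite !mxE !permE.
by rewrite !det_mulmx !det_perm odd_permV mulrAC -signr_addb addbb mul1r.
Qed.

Lemma split_lshift m n (i : 'I_m) : split (lshift n i) = inl i.
Proof. exact: (unsplitK (inl i)). Qed.

Lemma split_rshift m n (i : 'I_n) : split (rshift m i) = inr i.
Proof. exact: (unsplitK (inr i)). Qed.

Lemma enum_val_setC_notin {T : finType} (C : {set T}) (a : 'I_#|~: C|) :
  enum_val a \notin C.
Proof. by rewrite -in_setC; apply: enum_valP. Qed.

Section ExtOrd.
Context {n r : nat}.
Implicit Types (C : {set 'I_n}).

Definition ext_ord C (i : 'I_(#|C| + r)) : 'I_(n + r) :=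
  match split i with inl a => lshift r (enum_val a) | inr b => rshift n b end.

Lemma ext_ord_inj C : injective (ext_ord C).
Proof.
rewrite /ext_ord => i j.
case: (split_ordP i) => a ->; case: (split_ordP j) => b ->.
- by move/lshift_inj/enum_val_inj ->.
- by move/eqP; rewrite eq_lrshift.
- by move/eqP; rewrite eq_rlshift.
- by move/rshift_inj ->.
Qed.

Lemma ext_ord_neq_lshift C i a : a \notin C -> ext_ord C i != lshift r a.
Proof.
rewrite /ext_ord => aNC; case: (split_ordP i) => b _; last by rewrite eq_rlshift.
by rewrite eq_lshift; apply: contraNneq aNC => <-; apply: enum_valP.
Qed.

(* Lists [~: C] before [C ⊎ 'I_r]: reindexing [unit_rows_outside C M] along
   it gives a block lower triangular matrix with an identity upper left block. *)
Definition ext_ord_compl C (i : 'I_(#|~: C| + (#|C| + r))) : 'I_(n + r) :=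
  match split i with inl a => lshift r (enum_val a) | inr b => ext_ord C b end.

Lemma ext_ord_compl_inj C : injective (ext_ord_compl C).
Proof.
rewrite /ext_ord_compl => i j.
case: (split_ordP i) => a ->; case: (split_ordP j) => b ->.
- by move/lshift_inj/enum_val_inj ->.
- by move/eqP; rewrite eq_sym (negbTE (ext_ord_neq_lshift _ _ _ (enum_val_setC_notin C a))).
- by move/eqP; rewrite (negbTE (ext_ord_neq_lshift _ _ _ (enum_val_setC_notin C b))).
- by move/ext_ord_inj ->.
Qed.

End ExtOrd.

Section PrincipalMinors.
Variables (R : comNzRingType) (n r : nat).
Implicit Types (C : {set 'I_n}) (M : 'M[R]_(n + r)).

Definition unit_rows_outside C M : 'M[R]_(n + r) :=
  \matrix_(i, j) if split i is inl a then
                   if a \in C then M i j else (i == j)%:R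
                 else M i j.

Lemma det_unit_rows_outside C M :
  \det (unit_rows_outside C M) = \det (mxsub (ext_ord C) (ext_ord C) M).
Proof.
have card_split : (#|~: C| + (#|C| + r) = n + r)%N.
  by rewrite addnA [(#|~: C| + _)%N]addnC cardsC card_ord.
rewrite -(det_mxsub_bij _ (ext_ord_compl_inj C) card_split) -[mxsub _ _ _]submxK.
have -> : ursubmx (mxsub (ext_ord_compl C) (ext_ord_compl C) (unit_rows_outside C M)) = 0.
  apply/matrixP => a b; rewrite !mxE /ext_ord_compl !split_lshift split_rshift.
  rewrite (negbTE (enum_val_setC_notin C a)) eq_sym.
  by rewrite (negbTE (ext_ord_neq_lshift _ _ _ (enum_val_setC_notin C a))).
have -> : ulsubmx (mxsub (ext_ord_compl C) (ext_ord_compl C) (unit_rows_outside C M)) = 1%:M.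
  apply/matrixP => a b; rewrite !mxE /ext_ord_compl !split_lshift.
  by rewrite (negbTE (enum_val_setC_notin C a)) eq_lshift (inj_eq enum_val_inj).
have -> : drsubmx (mxsub (ext_ord_compl C) (ext_ord_compl C) (unit_rows_outside C M))
          = mxsub (ext_ord C) (ext_ord C) M.
  apply/matrixP => a b; rewrite !mxE /ext_ord_compl !split_rshift /ext_ord.
  by case: (split_ordP a) => c _; rewrite ?split_lshift ?split_rshift ?enum_valP.
by rewrite det_lblock det1 mul1r.
Qed.

Lemma det_pid_add_mx_unit_rows M :
  \det (pid_mx n + M) = \sum_C \det (unit_rows_outside C M).
Proof.
have pid_l a j : (pid_mx n + M) (lshift r a) j = M (lshift r a) j + (lshift r a == j)%:R.
  by rewrite !mxE /= ltn_ord andbT addrC.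
have pid_r b j : (pid_mx n + M) (rshift n b) j = M (rshift n b) j.
  by rewrite !mxE /= ltnNge leq_addr andbF add0r.
have unit_l C a j : unit_rows_outside C M (lshift r a) j
                    = if a \in C then M (lshift r a) j else (lshift r a == j)%:R.
  by rewrite mxE split_lshift.
have unit_r C b j : unit_rows_outside C M (rshift n b) j = M (rshift n b) j.
  by rewrite mxE split_rshift.
rewrite /determinant [RHS]exchange_big /=; apply: eq_bigr => s _.
rewrite -mulr_sumr; congr (_ * _).
under [RHS]eq_bigr => C _ do rewrite big_split_ord /= (eq_bigr _ (fun a _ => unit_l C a _))
  (eq_bigr _ (fun b _ => unit_r C b _)).
rewrite -mulr_suml big_split_ord /= (eq_bigr _ (fun a _ => pid_l a _)).
by rewrite (eq_bigr _ (fun b _ => pid_r b _)) bigA_distr.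
Qed.

Lemma det_pid_add_mx M :
  \det (pid_mx n + M) = \sum_C \det (mxsub (ext_ord C) (ext_ord C) M).
Proof.
by rewrite det_pid_add_mx_unit_rows; apply: eq_bigr => C _; apply: det_unit_rows_outside.
Qed.

End PrincipalMinors.

Lemma det_block_mx1 {R : comNzRingType} {m n} (B : 'M[R]_(m, n)) (C : 'M[R]_(n, m))
    (D : 'M[R]_n) :
  \det (block_mx 1%:M B C D) = \det (D - C *m B).
Proof.
have -> : block_mx 1%:M B C D = block_mx 1%:M 0 C 1%:M *m block_mx 1%:M B 0 (D - C *m B).
  by rewrite mulmx_block !mul1mx !mul0mx mulmx1 !addr0 addrC subrK.
by rewrite det_mulmx det_lblock det_ublock !det1 !mul1r.
Qed.

Definition border_mx {R : zmodType} {n r} (X : 'M[R]_(n, r)) (A : 'M[R]_r)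
    (C : {set 'I_n}) : 'M[R]_(#|C| + r) :=
  block_mx 0 (rows_of X C) (- (rows_of X C)^T) A.

Lemma map_border_mx {R S : comNzRingType} (f : {rmorphism R -> S}) {n r}
    (X : 'M[R]_(n, r)) (A : 'M[R]_r) (C : {set 'I_n}) :
  map_mx f (border_mx X A C) = border_mx (map_mx f X) (map_mx f A) C.
Proof.
have rows_map : rows_of (map_mx f X) C = map_mx f (rows_of X C).
  by apply/matrixP => i j; rewrite !mxE.
by rewrite /border_mx map_block_mx map_mx0 map_mxN -map_trmx rows_map.
Qed.

Lemma mxsub_ext_ord_block {R : comNzRingType} {n r} (u : R) (X : 'M[R]_(n, r))
    (A : 'M[R]_r) (C : {set 'I_n}) :
  mxsub (ext_ord C) (ext_ord C) (block_mx 0 X (- (u *: X^T)) A)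
  = block_mx 0 (rows_of X C) (- (u *: (rows_of X C)^T)) A.
Proof.
apply/matrixP => i j; rewrite mxE /ext_ord.
case: (split_ordP i) => a ->; case: (split_ordP j) => b ->;
  by rewrite ?block_mxEul ?block_mxEur ?block_mxEdl ?block_mxEdr ?mxE.
Qed.

Lemma det_add_scale_gram {R : comNzRingType} {n r} (u : R) (X : 'M[R]_(n, r))
    (A : 'M[R]_r) :
  \det (A + u *: (X^T *m X)) = \sum_(C : {set 'I_n}) u ^+ #|C| * \det (border_mx X A C).
Proof.
have -> : A + u *: (X^T *m X) = A - (- (u *: X^T)) *m X by rewrite mulNmx opprK scalemxAl.
rewrite -det_block_mx1.
have -> : block_mx 1%:M X (- (u *: X^T)) A = pid_mx n + block_mx 0 X (- (u *: X^T)) A.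
  by rewrite (@pid_mx_block _ r r) add_block_mx !add0r addr0.
rewrite det_pid_add_mx; apply: eq_bigr => C _; rewrite mxsub_ext_ord_block.
have -> : block_mx 0 (rows_of X C) (- (u *: (rows_of X C)^T)) A
          = border_mx X A C *m block_mx u%:M 0 0 1%:M.
  by rewrite mulmx_block !mulmx0 !mulmx1 !addr0 !add0r mul0mx mulNmx mul_mx_scalar.
by rewrite det_mulmx det_ublock det_scalar det1 mulr1 mulrC.
Qed.

Definition dpp_card_genpoly {R : comNzRingType} {n r} (X : 'M[R]_(n, r)) (A : 'M[R]_r)
    : {poly R} :=
  \sum_(C : {set 'I_n}) (\det (border_mx X A C))%:P * 'X^#|C|.

Section CardGeneratingPolynomial.
Variables (R : comNzRingType) (n r : nat) (X : 'M[R]_(n, r)) (A : 'M[R]_r).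

Lemma coef_dpp_card_genpoly m :
  (dpp_card_genpoly X A)`_m = \sum_(C : {set 'I_n} | #|C| == m) \det (border_mx X A C).
Proof.
rewrite coef_sum [RHS]big_mkcond; apply: eq_bigr => C _.
by rewrite coefCM coefXn eq_sym; case: (_ == _); rewrite ?mulr1 ?mulr0.
Qed.

Lemma horner1_dpp_card_genpoly : (dpp_card_genpoly X A).[1] = \det (A + X^T *m X).
Proof.
rewrite -[X^T *m X]scale1r det_add_scale_gram horner_sum; apply: eq_bigr => C _.
by rewrite hornerCM hornerXn !expr1n mulr1 mul1r.
Qed.

Lemma dpp_card_genpolyE :
  dpp_card_genpoly X A = \det (map_mx polyC A + 'X *: map_mx polyC (X^T *m X)).
Proof.
rewrite map_mxM -map_trmx det_add_scale_gram; apply: eq_bigr => C _.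
by rewrite -map_border_mx det_map_mx mulrC.
Qed.

End CardGeneratingPolynomial.

Lemma det_pencil_congr_skew {R : comNzRingType} {r} (Q S : 'M[R]_r) : S^T = - S ->
  \det (map_mx polyC (Q *m S *m Q) + 'X *: map_mx polyC (Q *m Q))
  = (\det Q ^+ 2)%:P * char_poly S.
Proof.
move=> skewS; rewrite !map_mxM; set Qp := map_mx polyC Q.
have -> : Qp *m map_mx polyC S *m Qp + 'X *: (Qp *m Qp)
          = Qp *m (map_mx polyC S + 'X%:M) *m Qp.
  by rewrite mulmxDr mulmxDl mul_mx_scalar scalemxAl.
have -> : map_mx polyC S + 'X%:M = (char_poly_mx S)^T.
  by rewrite /char_poly_mx linearB /= tr_scalar_mx map_trmx skewS map_mxN opprK addrC.
by rewrite !det_mulmx det_tr det_map_mx mulrAC -expr2 rmorphXn.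
Qed.

Section BernoulliPgf.
Variables (R : realType) (c k : nat).

Lemma coef_bern_pgf (p : 'I_k -> R) m :
  ((\prod_(l < k) ((p l)%:P * 'X^2 + (1 - p l)%:P)) * 'X^c)`_m = bern_affine_law c p m.
Proof.
rewrite bigA_distr mulr_suml coef_sum [RHS]big_mkcond; apply: eq_bigr => T _.
have -> : \prod_(l < k) (if l \in T then (p l)%:P * 'X^2 else (1 - p l)%:P)
          = (\prod_(l in T) p l * \prod_(l in ~: T) (1 - p l))%:P * 'X^(2 * #|T|).
  rewrite (bigID (mem T)) /= (eq_bigr (fun l => (p l)%:P * 'X^2)); last by move=> l ->.
  rewrite [X in _ * X](eq_bigr (fun l => (1 - p l)%:P)); last by move=> l /negbTE ->.
  rewrite big_split /= prodr_const -!rmorph_prod polyCM exprM mulrAC.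
  by congr (_%:P * _%:P * _); apply: eq_bigl => l; rewrite in_setC.
rewrite -mulrA -exprD coefCM coefXn addnC eq_sym.
by case: (_ == _); rewrite ?mulr1 ?mulr0.
Qed.

Lemma horner1_bern_pgf (p : 'I_k -> R) :
  ((\prod_(l < k) ((p l)%:P * 'X^2 + (1 - p l)%:P)) * 'X^c).[1] = 1.
Proof.
rewrite hornerM hornerXn expr1n mulr1 horner_prod; apply: big1 => l _.
by rewrite hornerD hornerCM hornerXn expr1n mulr1 hornerC addrC subrK.
Qed.

Lemma bern_affine_law_prod_X2D (nu : 'I_k -> R) m :
  let G := \prod_(l < k) ('X^2 + (nu l ^+ 2)%:P) * 'X^c in
  G`_m / G.[1] = bern_affine_law c (fun l => 1 / (1 + nu l ^+ 2)) m.
Proof.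
pose p l := 1 / (1 + nu l ^+ 2).
have nu_neq0 l : 1 + nu l ^+ 2 != 0 by rewrite lt0r_neq0 // ltr_wpDr ?sqr_ge0.
have -> : \prod_(l < k) ('X^2 + (nu l ^+ 2)%:P)
          = (\prod_(l < k) (1 + nu l ^+ 2))%:P
            * \prod_(l < k) ((p l)%:P * 'X^2 + (1 - p l)%:P).
  rewrite rmorph_prod -big_split /=; apply: eq_bigr => l _.
  rewrite mulrDr mulrA -!polyCM /p mul1r divff // mul1r.
  by rewrite mulrBr mulr1 divff // addrAC subrr add0r.
have prod_neq0 : \prod_(l < k) (1 + nu l ^+ 2) != 0 by apply/prodf_neq0 => l _.
rewrite /= -mulrA coefCM hornerCM -mulf_div divff // mul1r horner1_bern_pgf divr1.
exact: coef_bern_pgf.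
Qed.

End BernoulliPgf.

Lemma sum_dpp_prob_card {R : realType} {n r} (X : 'M[R]_(n, r)) (A : 'M[R]_r) m :
  \sum_(C : {set 'I_n} | #|C| == m) dpp_prob X A C
  = (dpp_card_genpoly X A)`_m / (dpp_card_genpoly X A).[1].
Proof. by rewrite -mulr_suml coef_dpp_card_genpoly horner1_dpp_card_genpoly. Qed.

Lemma sym_posdef_unitmx {R : realType} {r} (Q : 'M[R]_r) : sym_posdef Q -> Q \in unitmx.
Proof.
case=> _ posQ; rewrite unitmxE unitfE; apply/det0P => -[v v_neq0 vQ].
by have := posQ v v_neq0; rewrite vQ mul0mx mxE ltxx.
Qed.

Theorem mainTheorem9 (R : realType) (n r : nat) (X : 'M[R]_(n, r)) (A : 'M[R]_r)
  (Q : 'M[R]_r) (k : nat) (nu : 'I_k -> R) :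
  \rank X = r ->
  A^T = - A ->
  (* Q = (X^T X)^{1/2}, the symmetric positive definite square root *)
  sym_posdef Q -> Q *m Q = X^T *m X ->
  k = r./2 ->
  (* spectrum of S = Q^{-1} A Q^{-1}: +-i nu_l (l < k), plus 0 if r is odd *)
  char_poly (invmx Q *m A *m invmx Q)
    = (\prod_(l < k) ('X ^+ 2 + (nu l ^+ 2)%:P))
      * 'X ^+ odd r ->
  forall m : nat,
    \sum_(C : {set 'I_n} | #|C| == m) dpp_prob X A C
    = bern_affine_law (odd r) (fun l => 1 / (1 + nu l ^+ 2)) m.
Proof.
move=> _ skewA posQ QQ _ charS m.
have unitQ := sym_posdef_unitmx Q posQ.
have [symQ _] := posQ.
set S := invmx Q *m A *m invmx Q in charS.
have skewS : S^T = - S.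
  by rewrite /S !trmx_mul trmx_inv symQ skewA mulNmx mulmxN mulmxA.
have AE : A = Q *m S *m Q.
  by rewrite /S !mulmxA mulmxV // mul1mx -mulmxA mulVmx // mulmx1.
have detQ2_neq0 : \det Q ^+ 2 != 0 by rewrite expf_neq0 // -unitfE -unitmxE.
rewrite sum_dpp_prob_card dpp_card_genpolyE -QQ AE det_pencil_congr_skew // charS.
by rewrite coefCM hornerCM -mulf_div divff // mul1r bern_affine_law_prod_X2D.
Qed.
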